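(* Let $A$ and $B$ be categories with variances, let $(R_1,L_1)$ be a span on $A$ and $(R_2,L_2)$ a span on $B$, and let $F\colon A\times B\rightarrow C$ be a functor of variance with respect to the product variance on $A\times B$. Assume that for every object $y$ of $B$ the end $[\int_{L_1}F](y):=\int_{L_1}F^y$ exists, with universal wedge $\omega^y=(\omega^y_a\colon \int_{L_1}F^y\rightarrow F(L_1(a),y))_{a\in R_1}$. Then the object assignment $y\mapsto [\int_{L_1}F](y)$ extends uniquely to a functor of variance $\int_{L_1}F\colon B\rightarrow C$ such that for every object $a$ of $R_1$ and every morphism $g$ of $B$, $$F(id_{L_1(a)},g)\circ \omega^{g_s}_a = \omega^{g_t}_a\circ [\textstyle\int_{L_1}F](g)$$ as morphisms $[\int_{L_1}F](g_s)\rightarrow F(L_1(a),g_t)$.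
   Context: A variance on a category $A$ is a pair $(E,M)$ of subcategories containing all objects such that every morphism $f$ factors uniquely as $f=me$ and uniquely as $f=e'm'$ with $e,e'$ in $E$ (covariant morphisms) and $m,m'$ in $M$ (contravariant morphisms). For $f\colon x\rightarrow y$ write $f=f^mf^e$ with $f^e\colon x\rightarrow f_t$ in $E$, $f^m\colon f_t\rightarrow y$ in $M$, and $f=f_ef_m$ with $f_m\colon x\rightarrow f_s$ in $M$, $f_e\colon f_s\rightarrow y$ in $E$. A functor $F\colon A\rightarrow C$ of variance $(E,M)$ assigns objects to objects and to each morphism $f$ a morphism $F(f)\colon F(f_s)\rightarrow F(f_t)$, preserving identities and satisfying, for composable $x\xrightarrow{f}y\xrightarrow{g}z$, $F(gf)=F((g^ef^m)^e)F(f)F((g_mf_e)_m)=F((g^ef^m)^m)F(g)F((g_mf_e)_e)$. The product variance on $A\times B$: a morphism $(f,g)$ is covariant (resp. contravariant) iff $f$ and $g$ both are. For $F\colon A\times B\rightarrow C$ of variance and objects $y$ of $B$, $F^y\colon A\rightarrow C$ is the functor of variance $F^y(x)=F(x,y)$, $F^y(f)=F(f,id_y)$. A span on $A$ is a pair $(R,L)$ of a category $R$ and a functor $L\colon R\rightarrow A$. For a functor of variance $G\colon A\rightarrow C$, an $L$-wedge of $G$ is a pair $(c,\eta)$ with $c$ an object of $C$ and $\eta=(\eta_x\colon c\rightarrow G(Lx))_{x\in R}$ satisfying $G(L(f)^e)\eta_x=G(L(f)^m)\eta_y$ for every morphism $f\colon x\rightarrow y$ of $R$; a morphism $(c,\eta)\rightarrow(d,\theta)$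 of $L$-wedges is $h\colon c\rightarrow d$ with $\theta_x h=\eta_x$ for all $x$. The end $\int_L G$ is a terminal $L$-wedge, whose family is called the universal wedge. *)

(* Categories are presented in the one-sorted ("arrows-only")
   style: a type of objects, a single type of all morphisms with source and
   target maps, and a total composition whose laws are required only on
   composable pairs.  This avoids dependent-type transports, which the
   notion of "functor of variance" would otherwise require (F(f) has type
   F(f_s) -> F(f_t), where f_s, f_t are only propositionally determined). *)
From Stdlib Require Import ClassicalEpsilon.

Set Implicit Arguments.
Unset Strict Implicit.

Record Cat := {
  ob : Type;
  mor : Type;
  src : mor -> ob;
  tgt : mor -> ob;
  idm : ob -> mor;
  comp : mor -> mor -> mor;            (* comp g f = g o f *)
  src_idm : forall x, src (idm x) = x;
  tgt_idm : forall x, tgt (idm x) = x;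
  src_comp : forall f g, tgt f = src g -> src (comp g f) = src f;
  tgt_comp : forall f g, tgt f = src g -> tgt (comp g f) = tgt g;
  comp_idl : forall f, comp (idm (tgt f)) f = f;
  comp_idr : forall f, comp f (idm (src f)) = f;
  comp_assoc : forall f g h, tgt f = src g -> tgt g = src h ->
    comp h (comp g f) = comp (comp h g) f
}.

Arguments src {c} _.
Arguments tgt {c} _.
Arguments idm {c} _.
Arguments comp {c} _ _.

Record Functor (A B : Cat) := {
  fo : ob A -> ob B;
  fmor : mor A -> mor B;
  fmor_src : forall f, src (fmor f) = fo (src f);
  fmor_tgt : forall f, tgt (fmor f) = fo (tgt f);
  fmor_idm : forall x, fmor (idm x) = idm (fo x);
  fmor_comp : forall f g, tgt f = src g ->
    fmor (comp g f) = comp (fmor g) (fmor f)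
}.

Section Prod.
Variables A B : Cat.
Definition pcomp (g f : mor A * mor B) : mor A * mor B :=
  (comp (fst g) (fst f), comp (snd g) (snd f)).
Definition psrc (f : mor A * mor B) : ob A * ob B := (src (fst f), src (snd f)).
Definition ptgt (f : mor A * mor B) : ob A * ob B := (tgt (fst f), tgt (snd f)).
Definition pidm (x : ob A * ob B) : mor A * mor B := (idm (fst x), idm (snd x)).

Lemma pair_eq_inv (X Y : Type) (a a' : X) (b b' : Y) :
  (a, b) = (a', b') -> a = a' /\ b = b'.
Proof. intros H; inversion H; auto. Qed.

Definition prodCat : Cat.
Proof.
  refine {| ob := ob A * ob B; mor := mor A * mor B; src := psrc; tgt := ptgt;
            idm := pidm; comp := pcomp |}.
  - intros [x y]; unfold psrc, pidm; simpl; rewrite !src_idm; reflexivity.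
  - intros [x y]; unfold ptgt, pidm; simpl; rewrite !tgt_idm; reflexivity.
  - intros [f1 f2] [g1 g2] H; unfold ptgt, psrc in *; simpl in *.
    apply pair_eq_inv in H; destruct H as [H1 H2].
    rewrite (src_comp H1), (src_comp H2); reflexivity.
  - intros [f1 f2] [g1 g2] H; unfold ptgt, psrc in *; simpl in *.
    apply pair_eq_inv in H; destruct H as [H1 H2].
    rewrite (tgt_comp H1), (tgt_comp H2); reflexivity.
  - intros [f1 f2]; unfold pcomp, pidm, ptgt; simpl; rewrite !comp_idl; reflexivity.
  - intros [f1 f2]; unfold pcomp, pidm, psrc; simpl; rewrite !comp_idr; reflexivity.
  - intros [f1 f2] [g1 g2] [h1 h2] H H'; unfold pcomp, ptgt, psrc in *; simpl in *.
    apply pair_eq_inv in H; apply pair_eq_inv in H'.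
    destruct H as [H1 H2]; destruct H' as [H1' H2'].
    rewrite (comp_assoc H1 H1'), (comp_assoc H2 H2'); reflexivity.
Defined.
End Prod.

(* A variance (E, M) on A: two subcategories containing all objects
   (i.e. containing all identities and closed under composition) such that
   every morphism factors uniquely as f = m o e and uniquely as f = e' o m'
   with e, e' in E and m, m' in M. *)
Record Variance (A : Cat) := {
  covE : mor A -> Prop;
  contM : mor A -> Prop;
  covE_idm : forall x, covE (idm x);
  contM_idm : forall x, contM (idm x);
  covE_comp : forall f g, tgt f = src g -> covE f -> covE g -> covE (comp g f);
  contM_comp : forall f g, tgt f = src g -> contM f -> contM g -> contM (comp g f);
  fact_ME_ex : forall f : mor A, exists e m : mor A,
    covE e /\ contM m /\ tgt e = src m /\ f = comp m e;
  fact_ME_uniq : forall e m e' m' : mor A,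
    covE e -> contM m -> covE e' -> contM m' ->
    tgt e = src m -> tgt e' = src m' -> comp m e = comp m' e' ->
    e = e' /\ m = m';
  fact_EM_ex : forall f : mor A, exists m e : mor A,
    contM m /\ covE e /\ tgt m = src e /\ f = comp e m;
  fact_EM_uniq : forall m e m' e' : mor A,
    contM m -> covE e -> contM m' -> covE e' ->
    tgt m = src e -> tgt m' = src e' -> comp e m = comp e' m' ->
    m = m' /\ e = e'
}.

Section Factorizations.
Variables (A : Cat) (V : Variance A).

Definition fact_up (f : mor A) : mor A * mor A :=
  let s := constructive_indefinite_description _ (fact_ME_ex V f) in
  let t := constructive_indefinite_description _ (proj2_sig s) in
  (proj1_sig s, proj1_sig t).
Definition fact_lo (f : mor A) : mor A * mor A :=
  let s := constructive_indefinite_description _ (fact_EM_ex V f) in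
  let t := constructive_indefinite_description _ (proj2_sig s) in
  (proj1_sig s, proj1_sig t).

Definition upE (f : mor A) := fst (fact_up f).
Definition upM (f : mor A) := snd (fact_up f).
Definition loM (f : mor A) := fst (fact_lo f).
Definition loE (f : mor A) := snd (fact_lo f).
Definition fT (f : mor A) : ob A := tgt (upE f).
Definition fS (f : mor A) : ob A := tgt (loM f).
End Factorizations.

Record VFunctor (A C : Cat) (V : Variance A) := {
  vo : ob A -> ob C;
  vmor : mor A -> mor C;
  vmor_src : forall f, src (vmor f) = vo (fS V f);
  vmor_tgt : forall f, tgt (vmor f) = vo (fT V f);
  vmor_idm : forall x, vmor (idm x) = idm (vo x);
  vmor_comp1 : forall f g : mor A, tgt f = src g ->
    vmor (comp g f) =
      comp (vmor (upE V (comp (upE V g) (upM V f))))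
           (comp (vmor f) (vmor (loM V (comp (loM V g) (loE V f)))));
  vmor_comp2 : forall f g : mor A, tgt f = src g ->
    vmor (comp g f) =
      comp (vmor (upM V (comp (upE V g) (upM V f))))
           (comp (vmor g) (vmor (loE V (comp (loM V g) (loE V f)))))
}.

Definition is_product_variance (A B : Cat) (VA : Variance A) (VB : Variance B)
  (VAB : Variance (prodCat A B)) : Prop :=
  (forall p : mor (prodCat A B), covE VAB p <-> covE VA (fst p) /\ covE VB (snd p)) /\
  (forall p : mor (prodCat A B), contM VAB p <-> contM VA (fst p) /\ contM VB (snd p)).

(* Only the object and morphism assignments of the
   functor of variance G : A -> C enter the definition, so it is stated for
   an object map Go and a morphism map Gm (e.g. those of F^y). *)
Definition is_wedge (A C R : Cat) (V : Variance A) (L : Functor R A)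
  (Go : ob A -> ob C) (Gm : mor A -> mor C)
  (c : ob C) (eta : ob R -> mor C) : Prop :=
  (forall x, src (eta x) = c /\ tgt (eta x) = Go (fo L x)) /\
  (forall f : mor R,
     comp (Gm (upE V (fmor L f))) (eta (src f)) =
     comp (Gm (upM V (fmor L f))) (eta (tgt f))).

Definition is_end (A C R : Cat) (V : Variance A) (L : Functor R A)
  (Go : ob A -> ob C) (Gm : mor A -> mor C)
  (c : ob C) (eta : ob R -> mor C) : Prop :=
  is_wedge V L Go Gm c eta /\
  (forall (d : ob C) (theta : ob R -> mor C), is_wedge V L Go Gm d theta ->
     exists! h : mor C, src h = d /\ tgt h = c /\
       (forall x, comp (eta x) h = theta x)).

Definition partial_ob (A B C : Cat) (V : Variance (prodCat A B))
  (F : VFunctor C V) (y : ob B) : ob A -> ob C :=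
  fun x => vo F (x, y).
Definition partial_mor (A B C : Cat) (V : Variance (prodCat A B))
  (F : VFunctor C V) (y : ob B) : mor A -> mor C :=
  fun f => vmor F (f, idm y).

From Stdlib Require Import ClassicalEpsilon.
Set Implicit Arguments.
Unset Strict Implicit.

(* Fix a morphism g of B.  Because the product variance factors (e, g) componentwise,
   the composition laws of F give F(e, g) = F(e, 1) F(1, g) = F(1, g) F(e, 1) for every
   covariant e of A, and the analogous identities for contravariant e.  These let F(1, g)
   slide across the wedge condition of omega^{g_s}, so that a |-> F(1, g) omega^{g_s}_a is
   an L1-wedge of F^{g_t}; the universal property of omega^{g_t} then gives the unique
   [int F](g) making the required squares commute.  The composition laws of [int F]
   follow from this uniqueness by pasting the squares of the factors. *)

(* Endpoint equalities are normalised with [src], [tgt], [fS], [fT] of the given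
   morphisms; conditional rules such as [src_comp] discharge their composability premise
   by a recursive call. *)
Ltac endpoints := autorewrite with endpoints; congruence.

#[export] Hint Rewrite @src_idm @tgt_idm : endpoints.
#[export] Hint Rewrite @src_comp @tgt_comp using endpoints : endpoints.

Lemma comp_idl_eq (A : Cat) (f : mor A) x : tgt f = x -> comp (idm x) f = f.
Proof. intros <-; apply comp_idl. Qed.

Lemma comp_idr_eq (A : Cat) (f : mor A) x : src f = x -> comp f (idm x) = f.
Proof. intros <-; apply comp_idr. Qed.

Lemma comp_assoc_mid (A : Cat) (a b c d : mor A) :
  tgt a = src b -> tgt b = src c -> tgt c = src d ->
  comp (comp d c) (comp b a) = comp d (comp (comp c b) a).
Proof.
  intros Hab Hbc Hcd.
  rewrite <- (comp_assoc (f := comp b a) (g := c) (h := d)), (comp_assoc Hab Hbc); endpoints.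
Qed.

Section VarianceFactorization.
Variables (A : Cat) (V : Variance A).

Lemma fact_up_spec f : covE V (upE V f) /\ contM V (upM V f) /\
  tgt (upE V f) = src (upM V f) /\ f = comp (upM V f) (upE V f).
Proof.
  unfold upE, upM, fact_up; cbv zeta.
  destruct (constructive_indefinite_description _ (fact_ME_ex V f)) as [e He]; simpl.
  destruct (constructive_indefinite_description _ _) as [m Hm]; exact Hm.
Qed.

Lemma fact_lo_spec f : contM V (loM V f) /\ covE V (loE V f) /\
  tgt (loM V f) = src (loE V f) /\ f = comp (loE V f) (loM V f).
Proof.
  unfold loM, loE, fact_lo; cbv zeta.
  destruct (constructive_indefinite_description _ (fact_EM_ex V f)) as [m Hm]; simpl.
  destruct (constructive_indefinite_description _ _) as [e He]; exact He.
Qed.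

Lemma upE_covE f : covE V (upE V f). Proof. apply fact_up_spec. Qed.
Lemma upM_contM f : contM V (upM V f). Proof. apply fact_up_spec. Qed.
Lemma loM_contM f : contM V (loM V f). Proof. apply fact_lo_spec. Qed.
Lemma loE_covE f : covE V (loE V f). Proof. apply fact_lo_spec. Qed.

Lemma upM_upE f : comp (upM V f) (upE V f) = f.
Proof. symmetry; apply fact_up_spec. Qed.
Lemma loE_loM f : comp (loE V f) (loM V f) = f.
Proof. symmetry; apply fact_lo_spec. Qed.

Lemma tgt_upE f : tgt (upE V f) = fT V f. Proof. reflexivity. Qed.
Lemma src_upM f : src (upM V f) = fT V f. Proof. symmetry; apply fact_up_spec. Qed.
Lemma tgt_loM f : tgt (loM V f) = fS V f. Proof. reflexivity. Qed.
Lemma src_loE f : src (loE V f) = fS V f. Proof. symmetry; apply fact_lo_spec. Qed.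

Lemma src_upE f : src (upE V f) = src f.
Proof.
  rewrite <- (upM_upE f) at 2; symmetry; apply src_comp.
  rewrite tgt_upE, src_upM; reflexivity.
Qed.

Lemma tgt_upM f : tgt (upM V f) = tgt f.
Proof.
  rewrite <- (upM_upE f) at 2; symmetry; apply tgt_comp.
  rewrite tgt_upE, src_upM; reflexivity.
Qed.

Lemma src_loM f : src (loM V f) = src f.
Proof.
  rewrite <- (loE_loM f) at 2; symmetry; apply src_comp.
  rewrite tgt_loM, src_loE; reflexivity.
Qed.

Lemma tgt_loE f : tgt (loE V f) = tgt f.
Proof.
  rewrite <- (loE_loM f) at 2; symmetry; apply tgt_comp.
  rewrite tgt_loM, src_loE; reflexivity.
Qed.

End VarianceFactorization.

#[export] Hint Rewrite @tgt_upE @src_upM @tgt_loM @src_loE @src_upE @tgt_upM @src_loM @tgt_loE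
  : endpoints.

Section FactorizationUniqueness.
Variables (A : Cat) (V : Variance A).

Lemma up_unique e m : covE V e -> contM V m -> tgt e = src m ->
  upE V (comp m e) = e /\ upM V (comp m e) = m.
Proof.
  intros He Hm Hem.
  apply (fact_ME_uniq (upE_covE V _) (upM_contM V _) He Hm); [endpoints | endpoints |].
  apply upM_upE.
Qed.

Lemma lo_unique m e : contM V m -> covE V e -> tgt m = src e ->
  loM V (comp e m) = m /\ loE V (comp e m) = e.
Proof.
  intros Hm He Hme.
  apply (fact_EM_uniq (loM_contM V _) (loE_covE V _) Hm He); [endpoints | endpoints |].
  apply loE_loM.
Qed.

Section Covariant.
Variables (e : mor A) (He : covE V e).

Lemma upE_cov : upE V e = e.
Proof. rewrite <- (comp_idl e) at 1; apply (up_unique He (contM_idm V _)); endpoints. Qed.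

Lemma upM_cov : upM V e = idm (tgt e).
Proof. rewrite <- (comp_idl e) at 1; apply (up_unique He (contM_idm V _)); endpoints. Qed.

Lemma loM_cov : loM V e = idm (src e).
Proof. rewrite <- (comp_idr e) at 1; apply (lo_unique (contM_idm V _) He); endpoints. Qed.

Lemma loE_cov : loE V e = e.
Proof. rewrite <- (comp_idr e) at 1; apply (lo_unique (contM_idm V _) He); endpoints. Qed.

Lemma fS_cov : fS V e = src e.
Proof. unfold fS; rewrite loM_cov; endpoints. Qed.

Lemma fT_cov : fT V e = tgt e.
Proof. unfold fT; rewrite upE_cov; reflexivity. Qed.
End Covariant.

Section Contravariant.
Variables (m : mor A) (Hm : contM V m).

Lemma upE_cont : upE V m = idm (src m).
Proof. rewrite <- (comp_idr m) at 1; apply (up_unique (covE_idm V _) Hm); endpoints. Qed.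

Lemma upM_cont : upM V m = m.
Proof. rewrite <- (comp_idr m) at 1; apply (up_unique (covE_idm V _) Hm); endpoints. Qed.

Lemma loM_cont : loM V m = m.
Proof. rewrite <- (comp_idl m) at 1; apply (lo_unique Hm (covE_idm V _)); endpoints. Qed.

Lemma loE_cont : loE V m = idm (tgt m).
Proof. rewrite <- (comp_idl m) at 1; apply (lo_unique Hm (covE_idm V _)); endpoints. Qed.

Lemma fS_cont : fS V m = tgt m.
Proof. unfold fS; rewrite loM_cont; reflexivity. Qed.

Lemma fT_cont : fT V m = src m.
Proof. unfold fT; rewrite upE_cont; endpoints. Qed.
End Contravariant.

Lemma fS_upE f : fS V (upE V f) = src f.
Proof. rewrite (fS_cov (upE_covE V f)); apply src_upE. Qed.

Lemma fT_upE f : fT V (upE V f) = fT V f.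
Proof. apply (fT_cov (upE_covE V f)). Qed.

Lemma fS_upM f : fS V (upM V f) = tgt f.
Proof. rewrite (fS_cont (upM_contM V f)); apply tgt_upM. Qed.

Lemma fT_upM f : fT V (upM V f) = fT V f.
Proof. rewrite (fT_cont (upM_contM V f)); apply src_upM. Qed.

Lemma fS_loM f : fS V (loM V f) = fS V f.
Proof. apply (fS_cont (loM_contM V f)). Qed.

Lemma fT_loM f : fT V (loM V f) = src f.
Proof. rewrite (fT_cont (loM_contM V f)); apply src_loM. Qed.

Lemma fS_loE f : fS V (loE V f) = fS V f.
Proof. rewrite (fS_cov (loE_covE V f)); apply src_loE. Qed.

Lemma fT_loE f : fT V (loE V f) = tgt f.
Proof. rewrite (fT_cov (loE_covE V f)); apply tgt_loE. Qed.

Lemma fS_idm x : fS V (idm x) = x.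
Proof. rewrite (fS_cov (covE_idm V x)); apply src_idm. Qed.

Lemma fT_idm x : fT V (idm x) = x.
Proof. rewrite (fT_cov (covE_idm V x)); apply tgt_idm. Qed.

Section Composite.
Variables (f g : mor A) (Hfg : tgt f = src g).

Lemma upE_comp :
  upE V (comp g f) = comp (upE V (comp (upE V g) (upM V f))) (upE V f).
Proof.
  assert (Hgf : comp g f = comp (comp (upM V g) (upM V (comp (upE V g) (upM V f))))
                                (comp (upE V (comp (upE V g) (upM V f))) (upE V f))).
  { rewrite comp_assoc_mid, upM_upE by endpoints.
    rewrite <- (upM_upE V f), <- (upM_upE V g) at 1.
    apply comp_assoc_mid; endpoints. }
  rewrite Hgf; apply up_unique; [apply covE_comp | apply contM_comp |];
    auto using upE_covE, upM_contM; endpoints.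
Qed.

Lemma loM_comp :
  loM V (comp g f) = comp (loM V (comp (loM V g) (loE V f))) (loM V f).
Proof.
  assert (Hgf : comp g f = comp (comp (loE V g) (loE V (comp (loM V g) (loE V f))))
                                (comp (loM V (comp (loM V g) (loE V f))) (loM V f))).
  { rewrite comp_assoc_mid, loE_loM by endpoints.
    rewrite <- (loE_loM V f), <- (loE_loM V g) at 1.
    apply comp_assoc_mid; endpoints. }
  rewrite Hgf; apply lo_unique; [apply contM_comp | apply covE_comp |];
    auto using loE_covE, loM_contM; endpoints.
Qed.

Lemma fT_comp : fT V (comp g f) = fT V (comp (upE V g) (upM V f)).
Proof. unfold fT at 1; rewrite upE_comp; endpoints. Qed.

Lemma fS_comp : fS V (comp g f) = fS V (comp (loM V g) (loE V f)).
Proof. unfold fS at 1; rewrite loM_comp; endpoints. Qed.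

Lemma vcomp1_endpoints :
  fS V (upE V (comp (upE V g) (upM V f))) = fT V f /\
  fT V (upE V (comp (upE V g) (upM V f))) = fT V (comp g f) /\
  fT V (loM V (comp (loM V g) (loE V f))) = fS V f /\
  fS V (loM V (comp (loM V g) (loE V f))) = fS V (comp g f).
Proof.
  rewrite fS_upE, fT_upE, fT_loM, fS_loM, fT_comp, fS_comp.
  repeat split; endpoints.
Qed.

Lemma vcomp2_endpoints :
  fS V (upM V (comp (upE V g) (upM V f))) = fT V g /\
  fT V (upM V (comp (upE V g) (upM V f))) = fT V (comp g f) /\
  fT V (loE V (comp (loM V g) (loE V f))) = fS V g /\
  fS V (loE V (comp (loM V g) (loE V f))) = fS V (comp g f).
Proof.
  rewrite fS_upM, fT_upM, fT_loE, fS_loE, fT_comp, fS_comp.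
  repeat split; endpoints.
Qed.
End Composite.
End FactorizationUniqueness.

#[export] Hint Rewrite @fS_idm @fT_idm @fS_upE @fT_upE @fS_upM @fT_upM @fT_loM @fT_loE
  : endpoints.

Section ProductVariance.
Variables (A B : Cat) (VA : Variance A) (VB : Variance B) (VAB : Variance (prodCat A B)).
Hypothesis HVAB : is_product_variance VA VB VAB.

Lemma comp_pair (f1 g1 : mor A) (f2 g2 : mor B) :
  comp (c := prodCat A B) (g1, g2) (f1, f2) = (comp g1 f1, comp g2 f2).
Proof. reflexivity. Qed.

Lemma src_pair (f1 : mor A) (f2 : mor B) : src (c := prodCat A B) (f1, f2) = (src f1, src f2).
Proof. reflexivity. Qed.

Lemma tgt_pair (f1 : mor A) (f2 : mor B) : tgt (c := prodCat A B) (f1, f2) = (tgt f1, tgt f2).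
Proof. reflexivity. Qed.

Lemma covE_pair f1 f2 : covE VA f1 -> covE VB f2 -> covE VAB (f1, f2).
Proof. intros H1 H2; apply HVAB; split; assumption. Qed.

Lemma contM_pair f1 f2 : contM VA f1 -> contM VB f2 -> contM VAB (f1, f2).
Proof. intros H1 H2; apply HVAB; split; assumption. Qed.

Lemma upE_pair f1 f2 : upE VAB (f1, f2) = (upE VA f1, upE VB f2).
Proof.
  rewrite <- (upM_upE VA f1), <- (upM_upE VB f2) at 1; rewrite <- comp_pair.
  apply up_unique; auto using covE_pair, contM_pair, upE_covE, upM_contM.
  rewrite src_pair, tgt_pair; f_equal; endpoints.
Qed.

Lemma upM_pair f1 f2 : upM VAB (f1, f2) = (upM VA f1, upM VB f2).
Proof.
  rewrite <- (upM_upE VA f1), <- (upM_upE VB f2) at 1; rewrite <- comp_pair.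
  apply up_unique; auto using covE_pair, contM_pair, upE_covE, upM_contM.
  rewrite src_pair, tgt_pair; f_equal; endpoints.
Qed.

Lemma loM_pair f1 f2 : loM VAB (f1, f2) = (loM VA f1, loM VB f2).
Proof.
  rewrite <- (loE_loM VA f1), <- (loE_loM VB f2) at 1; rewrite <- comp_pair.
  apply lo_unique; auto using covE_pair, contM_pair, loE_covE, loM_contM.
  rewrite src_pair, tgt_pair; f_equal; endpoints.
Qed.

Lemma loE_pair f1 f2 : loE VAB (f1, f2) = (loE VA f1, loE VB f2).
Proof.
  rewrite <- (loE_loM VA f1), <- (loE_loM VB f2) at 1; rewrite <- comp_pair.
  apply lo_unique; auto using covE_pair, contM_pair, loE_covE, loM_contM.
  rewrite src_pair, tgt_pair; f_equal; endpoints.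
Qed.

Lemma fS_pair f1 f2 : fS VAB (f1, f2) = (fS VA f1, fS VB f2).
Proof. unfold fS; rewrite loM_pair; reflexivity. Qed.

Lemma fT_pair f1 f2 : fT VAB (f1, f2) = (fT VA f1, fT VB f2).
Proof. unfold fT; rewrite upE_pair; reflexivity. Qed.
End ProductVariance.

#[export] Hint Rewrite @src_pair @tgt_pair @vmor_src @vmor_tgt : endpoints.

Section VFunctorLaws.
Variables (A C : Cat) (V : Variance A) (G : VFunctor C V).

Section Composable.
Variables (f g : mor A) (Hfg : tgt f = src g).

Lemma vmor_comp_covl : covE V g ->
  vmor G (comp g f) = comp (vmor G (upE V (comp g (upM V f)))) (vmor G f).
Proof.
  intros Hg.
  rewrite (vmor_comp1 G Hfg), (upE_cov Hg), (loM_cov Hg), comp_idl_eq by endpoints.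
  rewrite (loM_cov (loE_covE V _)), vmor_idm, comp_idr_eq; endpoints.
Qed.

Lemma vmor_comp_covr : covE V f ->
  vmor G (comp g f) = comp (vmor G g) (vmor G (loE V (comp (loM V g) f))).
Proof.
  intros Hf.
  rewrite (vmor_comp2 G Hfg), (upM_cov Hf), (loE_cov Hf), comp_idr_eq by endpoints.
  rewrite (upM_cov (upE_covE V _)), vmor_idm, comp_idl_eq; endpoints.
Qed.

Lemma vmor_comp_contl : contM V g ->
  vmor G (comp g f) = comp (vmor G f) (vmor G (loM V (comp g (loE V f)))).
Proof.
  intros Hg.
  rewrite (vmor_comp1 G Hfg), (upE_cont Hg), (loM_cont Hg), comp_idl_eq by endpoints.
  rewrite (upE_cont (upM_contM V _)), vmor_idm, comp_idl_eq; endpoints.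
Qed.

Lemma vmor_comp_contr : contM V f ->
  vmor G (comp g f) = comp (vmor G (upM V (comp (upE V g) f))) (vmor G g).
Proof.
  intros Hf.
  rewrite (vmor_comp2 G Hfg), (upM_cont Hf), (loE_cont Hf), comp_idr_eq by endpoints.
  rewrite (loE_cont (loM_contM V _)), vmor_idm, comp_idr_eq; endpoints.
Qed.
End Composable.
End VFunctorLaws.

Ltac variance_class :=
  solve [eauto using upE_covE, upM_contM, loM_contM, loE_covE, covE_idm, contM_idm,
    covE_pair, contM_pair].

#[export] Hint Rewrite @upE_cov @upM_cov @loM_cov @loE_cov @upE_cont @upM_cont @loM_cont @loE_cont
  using variance_class : factor.
#[export] Hint Rewrite @comp_idl_eq @comp_idr_eq using endpoints : factor.
#[export] Hint Rewrite @comp_pair : factor.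

Section Interchange.
Variables (A B C : Cat) (VA : Variance A) (VB : Variance B) (VAB : Variance (prodCat A B)).
Hypothesis HVAB : is_product_variance VA VB VAB.
Variable F : VFunctor C VAB.

#[local] Hint Rewrite (upE_pair HVAB) (upM_pair HVAB) (loM_pair HVAB) (loE_pair HVAB) : factor.

Lemma vmor_cov_pair_l e g : covE VA e ->
  vmor F (e, g) = comp (vmor F (e, idm (fT VB g))) (vmor F (idm (src e), g)).
Proof.
  intros He.
  replace (e, g) with (comp (c := prodCat A B) (e, idm (tgt g)) (idm (src e), g)) at 1
    by (autorewrite with factor; reflexivity).
  rewrite (vmor_comp_covl F); [autorewrite with factor endpoints | endpoints | variance_class].
  reflexivity.
Qed.

Lemma vmor_cov_pair_r e g : covE VA e ->
  vmor F (e, g) = comp (vmor F (idm (tgt e), g)) (vmor F (e, idm (fS VB g))).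
Proof.
  intros He.
  replace (e, g) with (comp (c := prodCat A B) (idm (tgt e), g) (e, idm (src g))) at 1
    by (autorewrite with factor; reflexivity).
  rewrite (vmor_comp_covr F); [autorewrite with factor endpoints | endpoints | variance_class].
  reflexivity.
Qed.

Lemma vmor_cont_pair_l m g : contM VA m ->
  vmor F (m, g) = comp (vmor F (m, idm (fT VB g))) (vmor F (idm (tgt m), g)).
Proof.
  intros Hm.
  replace (m, g) with (comp (c := prodCat A B) (idm (tgt m), g) (m, idm (src g))) at 1
    by (autorewrite with factor; reflexivity).
  rewrite (vmor_comp_contr F); [autorewrite with factor endpoints | endpoints | variance_class].
  reflexivity.
Qed.

Lemma vmor_cont_pair_r m g : contM VA m ->
  vmor F (m, g) = comp (vmor F (idm (src m), g)) (vmor F (m, idm (fS VB g))).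
Proof.
  intros Hm.
  replace (m, g) with (comp (c := prodCat A B) (m, idm (tgt g)) (idm (src m), g)) at 1
    by (autorewrite with factor; reflexivity).
  rewrite (vmor_comp_contl F); [autorewrite with factor endpoints | endpoints | variance_class].
  reflexivity.
Qed.

Lemma vmor_cov_interchange e g : covE VA e ->
  comp (vmor F (e, idm (fT VB g))) (vmor F (idm (src e), g)) =
  comp (vmor F (idm (tgt e), g)) (vmor F (e, idm (fS VB g))).
Proof. intros He; rewrite <- vmor_cov_pair_l, <- vmor_cov_pair_r; auto. Qed.

Lemma vmor_cont_interchange m g : contM VA m ->
  comp (vmor F (m, idm (fT VB g))) (vmor F (idm (tgt m), g)) =
  comp (vmor F (idm (src m), g)) (vmor F (m, idm (fS VB g))).
Proof. intros Hm; rewrite <- vmor_cont_pair_l, <- vmor_cont_pair_r; auto. Qed.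

Lemma vmor_idm_pair x y : vmor F (idm x, idm y) = idm (vo F (x, y)).
Proof. exact (vmor_idm F (x, y)). Qed.

Lemma vmor_idm_comp1 x f g : tgt f = src g ->
  vmor F (idm x, comp g f) =
  comp (vmor F (idm x, upE VB (comp (upE VB g) (upM VB f))))
       (comp (vmor F (idm x, f)) (vmor F (idm x, loM VB (comp (loM VB g) (loE VB f))))).
Proof.
  intros Hfg.
  replace (idm x, comp g f) with (comp (c := prodCat A B) (idm x, g) (idm x, f))
    by (autorewrite with factor; reflexivity).
  rewrite (vmor_comp1 F); [autorewrite with factor; reflexivity | endpoints].
Qed.

Lemma vmor_idm_comp2 x f g : tgt f = src g ->
  vmor F (idm x, comp g f) =
  comp (vmor F (idm x, upM VB (comp (upE VB g) (upM VB f))))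
       (comp (vmor F (idm x, g)) (vmor F (idm x, loE VB (comp (loM VB g) (loE VB f))))).
Proof.
  intros Hfg.
  replace (idm x, comp g f) with (comp (c := prodCat A B) (idm x, g) (idm x, f))
    by (autorewrite with factor; reflexivity).
  rewrite (vmor_comp2 F); [autorewrite with factor; reflexivity | endpoints].
Qed.
End Interchange.

Lemma end_factor_unique (A C R : Cat) (V : Variance A) (L : Functor R A)
  (Go : ob A -> ob C) (Gm : mor A -> mor C) c eta d theta (h1 h2 : mor C) :
  is_end V L Go Gm c eta -> is_wedge V L Go Gm d theta ->
  src h1 = d -> tgt h1 = c -> (forall x, comp (eta x) h1 = theta x) ->
  src h2 = d -> tgt h2 = c -> (forall x, comp (eta x) h2 = theta x) ->
  h1 = h2.
Proof.
  intros [_ Huniv] Htheta Hs1 Ht1 He1 Hs2 Ht2 He2.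
  destruct (Huniv d theta Htheta) as [h [_ Hh]].
  rewrite <- (Hh h1), <- (Hh h2); auto.
Qed.

Section EndFunctor.
Variables (A B C R1 : Cat) (VA : Variance A) (VB : Variance B) (VAB : Variance (prodCat A B)).
Hypothesis HVAB : is_product_variance VA VB VAB.
Variables (L1 : Functor R1 A) (F : VFunctor C VAB).
Variables (endF : ob B -> ob C) (omega : ob B -> ob R1 -> mor C).
Hypothesis Hend : forall y : ob B,
  is_end VA L1 (partial_ob F y) (partial_mor F y) (endF y) (omega y).

Lemma src_omega y a : src (omega y a) = endF y.
Proof. apply (Hend y). Qed.

Lemma tgt_omega y a : tgt (omega y a) = vo F (fo L1 a, y).
Proof. apply (Hend y). Qed.

#[local] Hint Rewrite src_omega tgt_omega (fS_pair HVAB) (fT_pair HVAB) : endpoints.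

Definition mediates (y y' : ob B) (phi : ob R1 -> mor C) (h : mor C) : Prop :=
  src h = endF y /\ tgt h = endF y' /\
  forall a, comp (phi a) (omega y a) = comp (omega y' a) h.

Lemma mediates_comp y y' y'' phi psi chi h h' :
  (forall a, src (phi a) = vo F (fo L1 a, y)) ->
  (forall a, tgt (phi a) = vo F (fo L1 a, y')) ->
  (forall a, src (psi a) = vo F (fo L1 a, y')) ->
  (forall a, chi a = comp (psi a) (phi a)) ->
  mediates y y' phi h -> mediates y' y'' psi h' -> mediates y y'' chi (comp h' h).
Proof.
  intros Hphi_s Hphi_t Hpsi_s Hchi (Hs & Ht & Hh) (Hs' & Ht' & Hh').
  split; [|split]; [endpoints | endpoints |].
  intros a; specialize (Hphi_s a); specialize (Hphi_t a); specialize (Hpsi_s a).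
  rewrite Hchi, <- comp_assoc, Hh, comp_assoc, Hh', comp_assoc; endpoints.
Qed.

Definition is_end_map (g : mor B) (h : mor C) : Prop :=
  mediates (fS VB g) (fT VB g) (fun a => vmor F (idm (fo L1 a), g)) h.

#[local] Hint Rewrite (fmor_src L1) (fmor_tgt L1) : endpoints.

Lemma whiskered_wedge g :
  is_wedge VA L1 (partial_ob F (fT VB g)) (partial_mor F (fT VB g)) (endF (fS VB g))
    (fun a => comp (vmor F (idm (fo L1 a), g)) (omega (fS VB g) a)).
Proof.
  split; [intros a; unfold partial_ob; cbv beta; split; endpoints |].
  intros f; unfold partial_mor.
  pose proof (proj2 (proj1 (Hend (fS VB g))) f) as Hwedge; unfold partial_mor in Hwedge.
  rewrite <- (fmor_src L1), <- (fmor_tgt L1), <- (src_upE VA (fmor L1 f)),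
    <- (tgt_upM VA (fmor L1 f)).
  rewrite !comp_assoc by endpoints.
  rewrite (vmor_cov_interchange HVAB) by apply upE_covE.
  rewrite <- comp_assoc, Hwedge, comp_assoc by endpoints.
  rewrite (tgt_upE VA), <- (src_upM VA), <- (vmor_cont_interchange HVAB) by apply upM_contM.
  reflexivity.
Qed.

Lemma is_end_map_exists g : exists h, is_end_map g h.
Proof.
  destruct (proj2 (Hend (fT VB g)) _ _ (whiskered_wedge g)) as [h [(Hs & Ht & Hh) _]].
  exists h; repeat split; auto.
Qed.

Lemma is_end_map_unique g h1 h2 : is_end_map g h1 -> is_end_map g h2 -> h1 = h2.
Proof.
  intros (Hs1 & Ht1 & Hh1) (Hs2 & Ht2 & Hh2).
  apply (end_factor_unique (Hend (fT VB g)) (whiskered_wedge g)); auto.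
Qed.

Lemma is_end_map_idm y : is_end_map (idm y) (idm (endF y)).
Proof.
  unfold is_end_map, mediates; rewrite fS_idm, fT_idm.
  split; [|split]; [endpoints | endpoints |].
  intros a; rewrite (vmor_idm_pair F), comp_idl_eq, comp_idr_eq; endpoints.
Qed.

Lemma is_end_map_comp3 g k f j hk hf hj :
  (forall x, vmor F (idm x, g) =
             comp (vmor F (idm x, k)) (comp (vmor F (idm x, f)) (vmor F (idm x, j)))) ->
  fS VB k = fT VB f -> fT VB k = fT VB g -> fT VB j = fS VB f -> fS VB j = fS VB g ->
  is_end_map k hk -> is_end_map f hf -> is_end_map j hj ->
  is_end_map g (comp hk (comp hf hj)).
Proof.
  intros Hg Hk_s Hk_t Hj_t Hj_s Hk Hf Hj.
  unfold is_end_map in *; rewrite <- Hj_s, <- Hk_t.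
  rewrite Hj_t in Hj; rewrite <- Hk_s in Hf.
  assert (Hfj : mediates (fS VB j) (fS VB k)
                  (fun a => comp (vmor F (idm (fo L1 a), f)) (vmor F (idm (fo L1 a), j)))
                  (comp hf hj)).
  { apply (mediates_comp (y' := fS VB f) (phi := fun a => vmor F (idm (fo L1 a), j))
             (psi := fun a => vmor F (idm (fo L1 a), f))); auto; intros; endpoints. }
  refine (mediates_comp _ _ _ _ Hfj Hk); intros; [endpoints | endpoints | endpoints | apply Hg].
Qed.

Definition end_map (g : mor B) : mor C :=
  proj1_sig (constructive_indefinite_description _ (is_end_map_exists g)).

Lemma end_map_spec g : is_end_map g (end_map g).
Proof. exact (proj2_sig (constructive_indefinite_description _ (is_end_map_exists g))). Qed.

Definition end_functor : VFunctor C VB.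
Proof.
  refine {| vo := endF; vmor := end_map |}.
  - intros g; apply (end_map_spec g).
  - intros g; apply (end_map_spec g).
  - intros y; apply (is_end_map_unique (end_map_spec _) (is_end_map_idm y)).
  - intros f g Hfg; destruct (vcomp1_endpoints VB Hfg) as (Hk_s & Hk_t & Hj_t & Hj_s).
    apply (is_end_map_unique (end_map_spec _)).
    eapply is_end_map_comp3; try apply end_map_spec; try eassumption.
    intros x; apply (vmor_idm_comp1 HVAB F x Hfg).
  - intros f g Hfg; destruct (vcomp2_endpoints VB Hfg) as (Hk_s & Hk_t & Hj_t & Hj_s).
    apply (is_end_map_unique (end_map_spec _)).
    eapply is_end_map_comp3; try apply end_map_spec; try eassumption.
    intros x; apply (vmor_idm_comp2 HVAB F x Hfg).
Defined.
End EndFunctor.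

Theorem mainTheorem5
  (A B C R1 R2 : Cat) (VA : Variance A) (VB : Variance B)
  (L1 : Functor R1 A) (L2 : Functor R2 B)
  (VAB : Variance (prodCat A B))
  (HVAB : is_product_variance VA VB VAB)
  (F : VFunctor C VAB)
  (endF : ob B -> ob C) (omega : ob B -> ob R1 -> mor C)
  (Hend : forall y : ob B,
     is_end VA L1 (partial_ob F y) (partial_mor F y) (endF y) (omega y)) :
  exists G : VFunctor C VB,
    (forall y, vo G y = endF y) /\
    (forall (a : ob R1) (g : mor B),
       comp (vmor F (idm (fo L1 a), g)) (omega (fS VB g) a) =
       comp (omega (fT VB g) a) (vmor G g)) /\
    (forall G' : VFunctor C VB,
       (forall y, vo G' y = endF y) ->
       (forall (a : ob R1) (g : mor B),
          comp (vmor F (idm (fo L1 a), g)) (omega (fS VB g) a) =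
          comp (omega (fT VB g) a) (vmor G' g)) ->
       forall g, vmor G' g = vmor G g).
Proof.
  exists (end_functor HVAB Hend); split; [|split].
  - reflexivity.
  - intros a g; apply (end_map_spec HVAB Hend g).
  - intros G' HG'_ob HG'_mor g; simpl.
    eapply (is_end_map_unique HVAB Hend); [| apply end_map_spec].
    split; [|split]; [rewrite vmor_src | rewrite vmor_tgt | intros a]; auto.
Qed.
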